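(* Let $A$ be an approximately biprojective Banach algebra and let $\phi\in\Delta(A)$. If $A$ has a left approximate identity, then $A$ is left $\phi$-contractible; if $A$ has a right approximate identity, then $A$ is right $\phi$-contractible.
   Context: $\Delta(A)$ is the set of nonzero multiplicative linear functionals on $A$. $A$ is approximately biprojective if there is a net $(\rho_\alpha)$ of continuous $A$-bimodule morphisms $A\to A\otimes_pA$ with $\pi_A\circ\rho_\alpha(a)\to a$ for all $a\in A$, where $\pi_A(a\otimes b)=ab$ and $a\cdot(b\otimes c)=ab\otimes c$, $(b\otimes c)\cdot a=b\otimes ca$. $A$ is left $\phi$-contractible if there is $m\in A$ with $am=\phi(a)m$ for all $a\in A$ and $\phi(m)=1$; right $\phi$-contractible if there is $m\in A$ with $ma=\phi(a)m$ for all $a$ and $\phi(m)=1$. *)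

From mathcomp Require Import all_boot all_algebra complex.
From mathcomp Require Import all_classical all_reals all_analysis.
Import numFieldNormedType.Exports.
Import GRing.Theory Num.Theory.
Local Open Scope ring_scope.

Set Implicit Arguments.
Unset Strict Implicit.
Unset Printing Implicit Defensive.

Definition is_linear (R : realType) (U V : lmodType R[i]) (f : U -> V) : Prop :=
  (forall x y, f (x + y) = f x + f y) /\ (forall (k : R[i]) x, f (k *: x) = k *: f x).

Definition is_bilinear (R : realType) (U V W : lmodType R[i]) (f : U -> V -> W) : Prop :=
  (forall y, is_linear (fun x => f x y)) /\ (forall x, is_linear (f x)).

Definition banach_algebra (R : realType) (A : completeNormedModType R[i])
    (mul : A -> A -> A) : Prop :=
  [/\ associative mul, is_bilinear mul &
      forall a b, `|mul a b| <= `|a| * `|b| ].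

Definition character (R : realType) (A : completeNormedModType R[i])
    (mul : A -> A -> A) (phi : A -> R[i]) : Prop :=
  [/\ is_linear (phi : A -> R[i]^o),
      forall a b, phi (mul a b) = phi a * phi b &
      exists a, phi a != 0 ].

Definition directed (I : Type) (le : I -> I -> Prop) : Prop :=
  [/\ inhabited I, forall i, le i i,
      forall i j k, le i j -> le j k -> le i k &
      forall i j, exists k, le i k /\ le j k ].

Definition net_cvg (R : realType) (V : normedModType R[i]) (I : Type)
    (le : I -> I -> Prop) (x : I -> V) (l : V) : Prop :=
  forall eps : R[i], 0 < eps ->
    exists i0, forall i, le i0 i -> `|x i - l| < eps.

Definition has_left_approx_identity (R : realType) (A : completeNormedModType R[i])
    (mul : A -> A -> A) : Prop :=
  exists (I : Type) (le : I -> I -> Prop) (e : I -> A),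
    directed le /\ forall a, net_cvg le (fun i => mul (e i) a) a.

Definition has_right_approx_identity (R : realType) (A : completeNormedModType R[i])
    (mul : A -> A -> A) : Prop :=
  exists (I : Type) (le : I -> I -> Prop) (e : I -> A),
    directed le /\ forall a, net_cvg le (fun i => mul a (e i)) a.

(* (T, tp) is the projective tensor product A \otimes_p A, characterised by
   its universal property: tp is bilinear with |a (x) b| <= |a||b|, and
   every bounded bilinear map f into a Banach space E with
   |f a b| <= M |a| |b| factors uniquely (among continuous linear maps)
   through a linear map g with |g x| <= M |x|.  Together with completeness
   of T this determines T up to isometric isomorphism. *)
Definition proj_tensor (R : realType) (A T : completeNormedModType R[i])
    (tp : A -> A -> T) : Prop :=
  [/\ is_bilinear tp,
      forall a b, `|tp a b| <= `|a| * `|b| &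
      forall (E : completeNormedModType R[i]) (f : A -> A -> E) (M : R[i]),
        is_bilinear f -> (forall a b, `|f a b| <= M * `|a| * `|b|) ->
        exists g : T -> E,
          [/\ is_linear g, forall x, `|g x| <= M * `|x|,
              forall a b, g (tp a b) = f a b &
              forall g' : T -> E, is_linear g' -> continuous g' ->
                (forall a b, g' (tp a b) = f a b) -> g' = g ] ].

Definition left_action (R : realType) (A T : completeNormedModType R[i])
    (mul : A -> A -> A) (tp : A -> A -> T) (la : A -> T -> T) : Prop :=
  forall a, [/\ is_linear (la a), continuous (la a) &
                forall b c, la a (tp b c) = tp (mul a b) c].

Definition right_action (R : realType) (A T : completeNormedModType R[i])
    (mul : A -> A -> A) (tp : A -> A -> T) (ra : A -> T -> T) : Prop :=
  forall a, [/\ is_linear (ra a), continuous (ra a) &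
                forall b c, ra a (tp b c) = tp b (mul c a)].

Definition product_map (R : realType) (A T : completeNormedModType R[i])
    (mul : A -> A -> A) (tp : A -> A -> T) (piA : T -> A) : Prop :=
  [/\ is_linear piA, continuous piA & forall a b, piA (tp a b) = mul a b].

Definition approx_biprojective (R : realType) (A T : completeNormedModType R[i])
    (mul : A -> A -> A) (la ra : A -> T -> T) (piA : T -> A) : Prop :=
  exists (I : Type) (le : I -> I -> Prop) (rho : I -> A -> T),
    [/\ directed le,
        forall i, [/\ is_linear (rho i), continuous (rho i) &
                      forall a b, rho i (mul a b) = la a (rho i b)
                                  /\ rho i (mul a b) = ra b (rho i a)] &
        forall a, net_cvg le (fun i => piA (rho i a)) a ].

Definition left_phi_contractible (R : realType) (A : completeNormedModType R[i])
    (mul : A -> A -> A) (phi : A -> R[i]) : Prop :=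
  exists m : A, (forall a, mul a m = phi a *: m) /\ phi m = 1.

Definition right_phi_contractible (R : realType) (A : completeNormedModType R[i])
    (mul : A -> A -> A) (phi : A -> R[i]) : Prop :=
  exists m : A, (forall a, mul m a = phi a *: m) /\ phi m = 1.

From mathcomp Require Import all_boot all_order all_algebra complex.
From mathcomp Require Import all_classical all_reals all_analysis.
From mathcomp Require Import ring.
Import numFieldNormedType.Exports.
Import Order.TTheory GRing.Theory Num.Theory.
Local Open Scope ring_scope.
Local Open Scope classical_set_scope.

Set Implicit Arguments.
Unset Strict Implicit.
Unset Printing Implicit Defensive.

(** Compose a map [rho_i] of the approximately biprojective structure with the
    bounded map [psi : a (x) b |-> phi(b) a] (bounded because characters of a
    Banach algebra have norm at most one).  The operator [L = psi \o rho_i]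
    satisfies [L (x y) = x L(y)] and [L (x y) = phi(y) L(x)], and since
    [phi \o psi = phi \o pi_A] while [pi_A (rho_i x0) -> x0] with [phi x0 = 1],
    some [i] gives [phi (L x0) <> 0].  For every [a] and every [e] in a left
    approximate identity, [e (a L(x0)) = phi(a) L(e) = e (phi(a) L(x0))], so
    [a L(x0) = phi(a) L(x0)] and [L(x0) / phi(L x0)] is the required element.
    The right-handed statement is the left-handed one for the opposite
    algebra. *)

Section NormedSpaces.
Variable R : realType.

Lemma lipschitz_continuous (V W : normedModType R[i]) (f : V -> W) (M : R[i]) :
  0 <= M -> (forall x y, `|f x - f y| <= M * `|x - y|) -> continuous f.
Proof.
move=> M0 fM x; apply/cvgrPdist_lt => e e0.
have M1 : 0 < M + 1 by rewrite ltr_wpDl.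
near=> y; apply: le_lt_trans (fM x y) _.
apply: (@le_lt_trans _ _ ((M + 1) * `|x - y|)); first by rewrite ler_wpM2r // lerDl.
rewrite -ltr_pdivlMl // mulrC.
near: y; move/cvgrPdist_lt: (@cvg_id _ (nbhs x)); apply; exact: divr_gt0.
Unshelve. all: by end_near.
Qed.

Lemma linear_continuous (V W : normedModType R[i]) (f : V -> W) (M : R[i]) :
  0 <= M -> is_linear f -> (forall x, `|f x| <= M * `|x|) -> continuous f.
Proof.
move=> M0 [fD fZ] fM; apply: (lipschitz_continuous M0) => x y.
by rewrite -scaleN1r -fZ -fD scaleN1r fM.
Qed.

Lemma is_linear_comp (U V W : lmodType R[i]) (f : U -> V) (g : V -> W) :
  is_linear f -> is_linear g -> is_linear (g \o f).
Proof. by move=> [fD fZ] [gD gZ]; split=> *; rewrite /= ?fD ?gD ?fZ ?gZ. Qed.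

Lemma continuousT_comp (U V W : topologicalType) (f : U -> V) (g : V -> W) :
  continuous f -> continuous g -> continuous (g \o f).
Proof. by move=> f_cont g_cont x; apply: continuous_comp; [exact: f_cont | exact: g_cont]. Qed.

Lemma net_cvg_unique (V : normedModType R[i]) (I : Type) (le : I -> I -> Prop)
    (x : I -> V) (l1 l2 : V) :
  directed le -> net_cvg le x l1 -> net_cvg le x l2 -> l1 = l2.
Proof.
move=> [_ _ _ le_dir] xl1 xl2; have [//|l12] := eqVneq l1 l2.
have d0 : 0 < `|l1 - l2| / 2 by rewrite divr_gt0 // normr_gt0 subr_eq0.
have [i1 near1] := xl1 _ d0; have [i2 near2] := xl2 _ d0.
have [k [k1 k2]] := le_dir i1 i2.
have := ltrD (near1 k k1) (near2 k k2); rewrite -splitr.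
by rewrite distrC; move/(le_lt_trans (ler_distD (x k) l1 l2)); rewrite ltxx.
Qed.

Lemma exists_expr_lt (q e : R[i]) : 0 <= q -> q < 1 -> 0 < e ->
  exists N : nat, q ^+ N < e.
Proof.
move=> q0 q1 e0; have [qr er] : q \is Num.real /\ e \is Num.real.
  by rewrite ger0_real // gtr0_real.
move: q0 q1 e0; rewrite -[q](RRe_real qr) -[e](RRe_real er).
rewrite lecE !ltcE /= => /andP[_ q0] /andP[_ q1] /andP[_ e0].
have : (GRing.exp (complex.Re q) : R ^nat) @ \oo --> 0.
  by apply: cvg_expr; rewrite ger0_norm.
move/cvgrPdist_lt => /(_ _ e0) [N _ qN].
exists N; rewrite -rmorphXn ltcR.
by have := qN N (leqnn N); rewrite sub0r normrN ger0_norm // exprn_ge0.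
Qed.

Section Contraction.
Variables (V : completeNormedModType R[i]) (g : V -> V) (q : R[i]).
Hypotheses (q_ge0 : 0 <= q) (q_lt1 : q < 1).
Hypothesis g_contr : forall x y, `|g x - g y| <= q * `|x - y|.

Lemma contraction_iter_dist m n : (m <= n)%N ->
  `|iter n g 0 - iter m g 0| <= `|g 0| / (1 - q) * q ^+ m.
Proof.
set p := fun n => iter n g 0; set C := `|g 0| / (1 - q).
have q1_neq0 : 1 - q != 0 by rewrite subr_eq0 eq_sym lt_eqF.
have step k : `|p k.+1 - p k| <= q ^+ k * `|g 0|.
  elim: k => [|k IH]; first by rewrite expr0 mul1r /p /= subr0.
  by rewrite exprS -mulrA; apply: le_trans (g_contr _ _) _; exact: ler_wpM2l.
have dist k : `|p (m + k)%N - p m| <= C * q ^+ m * (1 - q ^+ k).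
  elim: k => [|k IH]; first by rewrite addn0 subrr normr0 expr0 subrr mulr0.
  have -> : C * q ^+ m * (1 - q ^+ k.+1) =
            q ^+ (m + k) * `|g 0| + C * q ^+ m * (1 - q ^+ k).
    by rewrite /C exprD exprS; field.
  rewrite addnS; apply: le_trans (ler_distD (p (m + k)%N) _ _) _.
  exact: lerD (step _) IH.
move=> mn; rewrite -(subnKC mn); apply: le_trans (dist _) _.
apply: ler_piMr; first by rewrite mulr_ge0 ?exprn_ge0 // divr_ge0 // subr_ge0 ltW.
by rewrite lerBlDr lerDl exprn_ge0.
Qed.

Lemma contraction_iter_cvg : cvgn (fun n => iter n g 0).
Proof.
apply/cauchy_cvgP/cauchy_ballP => e e0; near_simpl.
set C := `|g 0| / (1 - q).
have C0 : 0 <= C by rewrite divr_ge0 // subr_ge0 ltW.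
have C1 : 0 < C + 1 by rewrite ltr_wpDl.
have [N qN] := exists_expr_lt q_ge0 q_lt1 (divr_gt0 e0 C1).
have close n m : (N <= n)%N -> (n <= m)%N -> `|iter m g 0 - iter n g 0| < e.
  move=> Nn nm; apply: le_lt_trans (contraction_iter_dist nm) _.
  apply: (@le_lt_trans _ _ ((C + 1) * q ^+ N)); last by rewrite mulrC -ltr_pdivlMr.
  apply: ler_pM; rewrite ?exprn_ge0 ?lerDl //.
  by apply: ler_wiXn2l => //; exact: ltW.
exists ([set n | (N <= n)%N], [set n | (N <= n)%N]); first by split; exists N.
move=> [n m] [/= Nn Nm]; rewrite -ball_normE /=.
by case: (leqP n m) => nm; [rewrite distrC; apply: close | apply: close => //; exact: ltnW].
Qed.

Lemma contraction_fixed_point : exists s, s = g s.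
Proof.
set p := fun n => iter n g 0.
have g_cont : continuous g := lipschitz_continuous q_ge0 g_contr.
have gp_lim : (g \o p) @ \oo --> g (limn p).
  by apply: continuous_cvg; [exact: g_cont | exact: contraction_iter_cvg].
have gp_shift : (g \o p) @ \oo --> limn p.
  by have -> : g \o p = (fun n => p n.+1) by []; rewrite cvg_shiftS; exact: contraction_iter_cvg.
by exists (limn p); exact: (cvg_unique (@norm_hausdorff _ _) gp_shift gp_lim).
Qed.

End Contraction.

End NormedSpaces.

Section BanachAlgebra.
Variables (R : realType) (A : completeNormedModType R[i]) (mul : A -> A -> A).
Hypothesis BA : banach_algebra mul.

Lemma mulA : associative mul.
Proof. by case: BA. Qed.

Lemma mul_norm a b : `|mul a b| <= `|a| * `|b|.
Proof. by case: BA. Qed.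

Lemma is_linear_mull a : is_linear (mul a).
Proof. by case: BA => _ [_ ?] _. Qed.

Lemma mulZr a (k : R[i]) x : mul a (k *: x) = k *: mul a x.
Proof. by case: (is_linear_mull a). Qed.

Lemma mulBr a x y : mul a (x - y) = mul a x - mul a y.
Proof.
by case: (is_linear_mull a) => mD mZ; rewrite mD -scaleN1r mZ scaleN1r.
Qed.

Lemma exists_quasi_inverse b : `|b| < 1 -> exists s, s = b + mul b s.
Proof.
move=> b1; apply: (contraction_fixed_point (normr_ge0 b) b1) => x y.
by rewrite opprD addrACA subrr add0r -mulBr mul_norm.
Qed.

Lemma character_norm_le (phi : A -> R[i]) :
  character mul phi -> forall a, `|phi a| <= `|a|.
Proof.
case=> [[phiD phiZ] phiM _] a; rewrite real_leNgt ?normr_real //.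
apply/negP => a_lt; have pa0 : phi a != 0 by rewrite -normr_gt0 (le_lt_trans _ a_lt).
pose b := (phi a)^-1 *: a.
have pb : phi b = 1 by rewrite phiZ; exact: mulVf.
have b1 : `|b| < 1 by rewrite normrZ normfV ltr_pdivrMl ?normr_gt0 // mulr1.
(* A quasi-inverse [s = b + b s] of [b] with [phi b = 1] forces [phi s = 1 + phi s]. *)
have [s s_eq] := exists_quasi_inverse b1.
have : phi s = 1 + phi s by rewrite {1}s_eq phiD phiM pb mul1r.
by move/eqP; rewrite -subr_eq0 opprD addrA addrAC subrr add0r oppr_eq0 oner_eq0.
Qed.

Section Character.
Variable phi : A -> R[i].
Hypothesis CH : character mul phi.

Lemma phiD x y : phi (x + y) = phi x + phi y.
Proof. by case: CH => [[]]. Qed.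

Lemma phiZ k x : phi (k *: x) = k * phi x.
Proof. by case: CH => [[_ ->]]. Qed.

Lemma phiM x y : phi (mul x y) = phi x * phi y.
Proof. by case: CH. Qed.

Lemma exists_phi_eq1 : exists x0, phi x0 = 1.
Proof. by case: CH => _ _ [a pa]; exists ((phi a)^-1 *: a); rewrite phiZ mulVf. Qed.

Lemma phi_neq0_near y x0 : phi x0 = 1 -> `|y - x0| < 1 -> phi y != 0.
Proof.
move=> px0; apply: contraTneq => py0.
rewrite -real_leNgt ?real1 ?normr_real // (le_trans _ (character_norm_le CH _)) //.
by rewrite -scaleN1r phiD phiZ py0 px0 add0r mulr1 normrN normr1.
Qed.

Lemma is_linear_phi_scale (v : A) : is_linear (fun a => phi a *: v).
Proof. by split=> *; rewrite ?phiD ?scalerDl ?phiZ ?scalerA. Qed.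

Lemma is_bilinear_phi_scale (L : A -> A) :
  is_linear L -> is_bilinear (fun a b => phi b *: L a).
Proof.
move=> [LD LZ]; split=> y; split=> *; rewrite ?LD ?scalerDr ?LZ ?phiD ?scalerDl //.
- by rewrite !scalerA mulrC.
- by rewrite phiZ scalerA.
Qed.

Lemma left_phi_contractible_of_multiplier (L : A -> A) (x0 : A) :
  (forall x y, L (mul x y) = mul x (L y)) ->
  (forall x y, L (mul x y) = phi y *: L x) ->
  phi x0 = 1 -> phi (L x0) != 0 -> has_left_approx_identity mul ->
  left_phi_contractible mul phi.
Proof.
move=> L_mull L_mulr px0 pL0 [I [le [e [le_dir e_cvg]]]].
have eigen a : mul a (L x0) = phi a *: L x0.
  suff same : (fun j => mul (e j) (mul a (L x0))) = (fun j => mul (e j) (phi a *: L x0)).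
    by apply: net_cvg_unique le_dir (e_cvg _) _; rewrite same; exact: e_cvg.
  by apply: funext => j; rewrite mulZr -!L_mull mulA !L_mulr px0 !scale1r.
exists ((phi (L x0))^-1 *: L x0); split=> [a|]; last by rewrite phiZ mulVf.
by rewrite mulZr eigen !scalerA mulrC.
Qed.

Section Tensor.
Variables (T : completeNormedModType R[i]) (tp : A -> A -> T).
Hypothesis PT : proj_tensor tp.

Lemma tensor_map_ext (E : completeNormedModType R[i]) (h1 h2 : T -> E)
    (f : A -> A -> E) (M : R[i]) :
  is_bilinear f -> (forall a b, `|f a b| <= M * `|a| * `|b|) ->
  is_linear h1 -> continuous h1 -> (forall a b, h1 (tp a b) = f a b) ->
  is_linear h2 -> continuous h2 -> (forall a b, h2 (tp a b) = f a b) -> h1 = h2.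
Proof.
move=> fB fM l1 c1 e1 l2 c2 e2.
by case: PT => _ _ /(_ E f M fB fM) [g [_ _ _ g_uniq]]; rewrite (g_uniq h1) // (g_uniq h2).
Qed.

Lemma exists_psi : exists psi : T -> A,
  [/\ is_linear psi, continuous psi & forall a b, psi (tp a b) = phi b *: a].
Proof.
have id_lin : is_linear (@id A) by [].
case: PT => _ _ /(_ A _ 1 (is_bilinear_phi_scale id_lin)) [].
  by move=> a b; rewrite normrZ mul1r mulrC ler_wpM2l // character_norm_le.
move=> psi [psi_lin psi_bound psi_tp _]; exists psi; split=> //.
exact: linear_continuous ler01 psi_lin psi_bound.
Qed.

Section Psi.
Variable psi : T -> A.
Hypotheses (psi_linear : is_linear psi) (psi_cont : continuous psi).
Hypothesis psi_tp : forall a b, psi (tp a b) = phi b *: a.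

Lemma psi_lift_unique (h : T -> A) (L : A -> A) (K : R[i]) :
  0 <= K -> is_linear L -> (forall a, `|L a| <= K * `|a|) ->
  is_linear h -> continuous h -> (forall a b, h (tp a b) = phi b *: L a) ->
  h = L \o psi.
Proof.
move=> K0 L_lin LK h_lin h_cont h_tp.
apply: (tensor_map_ext (is_bilinear_phi_scale L_lin) _ h_lin h_cont h_tp).
- move=> a b; rewrite normrZ [leRHS]mulrC.
  by apply: ler_pM => //; exact: character_norm_le.
- exact: is_linear_comp.
- exact: continuousT_comp psi_cont (linear_continuous K0 L_lin LK).
- by move=> a b /=; rewrite psi_tp; case: L_lin => _ ->.
Qed.

Lemma psi_mull x (la_x : T -> T) :
  is_linear la_x -> continuous la_x -> (forall b c, la_x (tp b c) = tp (mul x b) c) ->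
  psi \o la_x =1 mul x \o psi.
Proof.
move=> la_lin la_cont la_tp; apply/funeqP.
apply: psi_lift_unique (normr_ge0 x) (is_linear_mull x) (mul_norm x)
  (is_linear_comp la_lin psi_linear) (continuousT_comp la_cont psi_cont) _.
by move=> a b /=; rewrite la_tp psi_tp.
Qed.

Lemma psi_mulr y (ra_y : T -> T) :
  is_linear ra_y -> continuous ra_y -> (forall b c, ra_y (tp b c) = tp b (mul c y)) ->
  psi \o ra_y =1 (fun a => phi y *: a) \o psi.
Proof.
move=> ra_lin ra_cont ra_tp; apply/funeqP.
have scale_lin : is_linear (fun a : A => phi y *: a).
  by split=> *; rewrite ?scalerDr ?scalerA // mulrC.
apply: psi_lift_unique (normr_ge0 (phi y)) scale_lin _
  (is_linear_comp ra_lin psi_linear) (continuousT_comp ra_cont psi_cont) _.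
- by move=> a; rewrite normrZ.
- by move=> a b /=; rewrite ra_tp psi_tp phiM scalerA.
Qed.

Lemma phi_psi (piA : T -> A) : product_map mul tp piA ->
  forall t, phi (psi t) = phi (piA t).
Proof.
move=> [piA_lin piA_cont piA_tp] t; have [x0 px0] := exists_phi_eq1.
have x0_bound a : `|phi a *: x0| <= `|x0| * `|a|.
  by rewrite normrZ mulrC ler_wpM2l // character_norm_le.
have x0_cont := linear_continuous (normr_ge0 x0) (is_linear_phi_scale x0) x0_bound.
have agree : (fun t => phi (piA t) *: x0) = (fun a => phi a *: x0) \o psi.
  apply: psi_lift_unique (normr_ge0 x0) (is_linear_phi_scale x0) x0_bound _ _ _.
  - exact: is_linear_comp piA_lin (is_linear_phi_scale x0).
  - exact: continuousT_comp piA_cont x0_cont.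
  - by move=> a b /=; rewrite piA_tp phiM scalerA mulrC.
by have := congr1 (fun h => phi (h t)) agree; rewrite /= !phiZ px0 !mulr1.
Qed.

End Psi.

Lemma approx_biprojective_left_phi_contractible (la ra : A -> T -> T) (piA : T -> A) :
  left_action mul tp la -> right_action mul tp ra -> product_map mul tp piA ->
  approx_biprojective mul la ra piA -> has_left_approx_identity mul ->
  left_phi_contractible mul phi.
Proof.
move=> LA RA PM [I [le [rho [le_dir rho_bimod rho_cvg]]]].
have [psi [psi_lin psi_cont psi_tp]] := exists_psi.
have [x0 px0] := exists_phi_eq1.
have [i near_x0] := rho_cvg x0 1 ltr01; case: le_dir => _ le_refl _ _.
have [_ _ rho_mod] := rho_bimod i.
apply: (@left_phi_contractible_of_multiplier (psi \o rho i) x0) => //.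
- move=> x y /=; rewrite (rho_mod x y).1; have [la_lin la_cont la_tp] := LA x.
  exact: (psi_mull psi_lin psi_cont psi_tp la_lin la_cont la_tp).
- move=> x y /=; rewrite (rho_mod x y).2; have [ra_lin ra_cont ra_tp] := RA y.
  exact: (psi_mulr psi_lin psi_cont psi_tp ra_lin ra_cont ra_tp).
- by rewrite /= (phi_psi psi_lin psi_cont psi_tp PM) (phi_neq0_near px0 (near_x0 i (le_refl i))).
Qed.

End Tensor.
End Character.
End BanachAlgebra.

Section Opposite.
Variables (R : realType) (A T : completeNormedModType R[i]).
Variables (mul : A -> A -> A) (tp : A -> A -> T).

Lemma banach_algebra_op : banach_algebra mul -> banach_algebra (fun a b => mul b a).
Proof.
case=> mul_assoc [mul_linl mul_linr] mul_bound; split=> [a b c | | a b].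
- by rewrite mul_assoc.
- by split; [exact: mul_linr | exact: mul_linl].
- by rewrite mulrC.
Qed.

Lemma character_op (phi : A -> R[i]) :
  character mul phi -> character (fun a b => mul b a) phi.
Proof. by case=> phi_lin phiM phi_nz; split=> // a b; rewrite phiM mulrC. Qed.

Lemma proj_tensor_flip : proj_tensor tp -> proj_tensor (fun a b => tp b a).
Proof.
case=> [[tp_linl tp_linr] tp_norm tp_univ]; split=> [| a b | E f M [f_linl f_linr] f_bound].
- by split; [exact: tp_linr | exact: tp_linl].
- by rewrite mulrC.
have [] := tp_univ E (fun a b => f b a) M.
- by split; [exact: f_linr | exact: f_linl].
- by move=> a b; rewrite mulrAC.
move=> g [g_lin g_bound g_tp g_uniq]; exists g; split=> // g' g'_lin g'_cont g'_tp.
by apply: g_uniq => // a b; exact: g'_tp.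
Qed.

Lemma left_action_op (ra : A -> T -> T) :
  right_action mul tp ra -> left_action (fun a b => mul b a) (fun a b => tp b a) ra.
Proof. by move=> RA a; have [ra_lin ra_cont ra_tp] := RA a; split=> // b c; exact: ra_tp. Qed.

Lemma right_action_op (la : A -> T -> T) :
  left_action mul tp la -> right_action (fun a b => mul b a) (fun a b => tp b a) la.
Proof. by move=> LA a; have [la_lin la_cont la_tp] := LA a; split=> // b c; exact: la_tp. Qed.

Lemma product_map_op (piA : T -> A) :
  product_map mul tp piA -> product_map (fun a b => mul b a) (fun a b => tp b a) piA.
Proof. by case=> piA_lin piA_cont piA_tp; split=> // a b; exact: piA_tp. Qed.

Lemma approx_biprojective_op (la ra : A -> T -> T) (piA : T -> A) :
  approx_biprojective mul la ra piA ->
  approx_biprojective (fun a b => mul b a) ra la piA.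
Proof.
case=> I [le [rho [le_dir rho_bimod rho_cvg]]]; exists I, le, rho; split=> // i.
have [rho_lin rho_cont rho_mod] := rho_bimod i; split=> // a b.
by have [rho_l rho_r] := rho_mod b a; split.
Qed.

End Opposite.

Theorem mainTheorem5 (R : realType) (A : completeNormedModType R[i])
    (mul : A -> A -> A) (T : completeNormedModType R[i]) (tp : A -> A -> T)
    (la ra : A -> T -> T) (piA : T -> A) (phi : A -> R[i]) :
  banach_algebra mul ->
  proj_tensor tp ->
  left_action mul tp la ->
  right_action mul tp ra ->
  product_map mul tp piA ->
  approx_biprojective mul la ra piA ->
  character mul phi ->
  (has_left_approx_identity mul -> left_phi_contractible mul phi) /\
  (has_right_approx_identity mul -> right_phi_contractible mul phi).
Proof.
move=> BA PT LA RA PM AB CH; split.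
- exact (approx_biprojective_left_phi_contractible BA CH PT LA RA PM AB).
- exact (approx_biprojective_left_phi_contractible (banach_algebra_op BA)
    (character_op CH) (proj_tensor_flip PT) (left_action_op RA)
    (right_action_op LA) (product_map_op PM) (approx_biprojective_op AB)).
Qed.
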